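(* Let $\varepsilon>0$ and let $f,g:(0,\infty)\to\mathbb R$ be positive functions such that $g$ is non-decreasing and $\lim_{t\to0^+}f(t)=0$. Then there exists a family of sets $S(\rho)\subset\mathbb R$, $\rho\in(0,\infty)$, such that (1) $S(\tau)\subset S(\rho)$ for all $0<\tau\le\rho$; (2) for every $\rho\in(0,\infty)$ there exist $P,Q\in\mathbb R$ with $S(\rho)\subset B(P,g(\rho))\cup B(Q,g(\rho))$; (3) if $A\subset\mathbb R$ is such that for all $0<\rho\le\varepsilon$ and all $P\in S(\rho)$ there exists $Q\in A$ with $|Q-P|\le f(\rho)$, then $A$ is infinite.
   Context: $B(P,t)=\{x\in\mathbb R:|x-P|<t\}$ denotes the open interval of radius $t$ about $P$. *)

From Stdlib Require Import Reals List.
Open Scope R_scope.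

Definition ball (P t x : R) : Prop := Rabs (x - P) < t.

Definition finite_set (A : R -> Prop) : Prop :=
  exists l : list R, forall x, A x -> In x l.

From Stdlib Require Import Reals List Lra Lia Classical ClassicalEpsilon Wf_nat.
Open Scope R_scope.

(* Choose scales [h 0 > h 1 > ... -> 0] and radii [r 0 >= r 1 >= ...] in [(0, eps]]
   with [f (r n) < h n] and [h (n+1) < g (r n)], and let [S rho] consist of the points
   [-h n] with [r n <= rho].  All points of [S rho] except the first one lie within
   [h (N+1) < g (r N) <= g rho] of [0], which gives the two balls.  A set [A] meeting
   every [f (r n)]-neighbourhood of [-h n] has a point in [(-2 h n, 0)] for every [n],
   so it accumulates at [0] from the left and cannot be finite. *)

Lemma finite_set_gap_left (A : R -> Prop) (c : R) :
  finite_set A -> exists eta, 0 < eta /\ forall y, A y -> ~ (c - eta < y < c).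
Proof.
  intros [l Hl].
  enough (Hgap : exists eta, 0 < eta /\ forall y, In y l -> ~ (c - eta < y < c)).
  { destruct Hgap as [eta [Heta Hgap]]. exists eta. split; auto. }
  clear Hl. induction l as [|a l [eta [Heta Hgap]]].
  - exists 1. split; [lra | intros y []].
  - destruct (Rlt_dec a c) as [Hac | Hac].
    + exists (Rmin eta (c - a)). split; [apply Rmin_pos; lra |].
      pose proof (Rmin_l eta (c - a)). pose proof (Rmin_r eta (c - a)).
      intros y [<- | Hy] Hy'; [lra |]. apply (Hgap y Hy). lra.
    + exists eta. split; auto.
      intros y [<- | Hy] Hy'; [lra | exact (Hgap y Hy Hy')].
Qed.

Lemma classical_least_nat (P : nat -> Prop) :
  (exists n, P n) -> exists n, P n /\ forall m, P m -> (n <= m)%nat.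
Proof.
  intros HP.
  destruct (dec_inh_nat_subset_has_unique_least_element P (fun k => classic (P k)) HP)
    as [n [Hn _]].
  exists n. exact Hn.
Qed.

Lemma dependent_choice_nat {A : Type} (P : A -> Prop) (Rel : A -> A -> Prop) (a0 : A) :
  P a0 -> (forall x, P x -> exists y, P y /\ Rel x y) ->
  exists u : nat -> A, forall n, P (u n) /\ Rel (u n) (u (S n)).
Proof.
  intros H0 Hstep.
  pose (next := fun x : sig P =>
    let (y, Hy) := constructive_indefinite_description _ (Hstep _ (proj2_sig x)) in
    exist P y (proj1 Hy)).
  exists (fun n => proj1_sig (Nat.iter n next (exist P a0 H0))).
  intro n. set (x := Nat.iter n next _).
  split; [exact (proj2_sig x) |].
  change (Rel (proj1_sig x) (proj1_sig (next x))).
  unfold next. destruct constructive_indefinite_description as [y Hy]. exact (proj2 Hy).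
Qed.

Lemma halving_eventually_lt (u : nat -> R) :
  (forall n, 0 <= u n) -> (forall n, u (S n) <= u n / 2) ->
  forall eta, 0 < eta -> exists n, u n < eta.
Proof.
  intros Hpos Hhalf eta Heta.
  assert (Hgeom : forall n, u n <= u 0%nat * (/ 2) ^ n).
  { induction n as [|n IH]; [simpl; lra |].
    specialize (Hhalf n). simpl. lra. }
  assert (Hu0 : 0 <= u 0%nat) by apply Hpos.
  destruct (pow_lt_1_zero (/ 2) ltac:(rewrite Rabs_right; lra) (eta / (u 0%nat + 1)))
    as [N HN]; [apply Rdiv_lt_0_compat; lra |].
  exists N. specialize (HN N (le_n N)). specialize (Hgeom N).
  rewrite Rabs_right in HN by (apply Rle_ge, pow_le; lra).
  apply Rmult_lt_compat_r with (r := u 0%nat + 1) in HN; [| lra].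
  unfold Rdiv in HN. rewrite Rmult_assoc, Rinv_l, Rmult_1_r in HN by lra.
  assert (0 <= (/ 2) ^ N) by (apply pow_le; lra).
  nra.
Qed.

Lemma exists_small_value_below (f : R -> R) :
  (forall e, 0 < e -> exists d, 0 < d /\ forall t, 0 < t < d -> Rabs (f t) < e) ->
  forall e b, 0 < e -> 0 < b -> exists t, 0 < t <= b /\ f t < e.
Proof.
  intros Hflim e b He Hb.
  destruct (Hflim e He) as [d [Hd Hsmall]].
  exists (Rmin b d / 2).
  pose proof (Rmin_l b d). pose proof (Rmin_r b d). pose proof (Rmin_pos b d Hb Hd).
  split; [lra |].
  eapply Rle_lt_trans; [apply Rle_abs | apply Hsmall; lra].
Qed.

Section Staircase.

Variables (h r : nat -> R).

Definition staircase (rho x : R) : Prop := exists n, r n <= rho /\ x = - h n.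

Lemma staircase_mono tau rho x : tau <= rho -> staircase tau x -> staircase rho x.
Proof. intros Htr [n [Hn Hx]]. exists n. split; [lra | exact Hx]. Qed.

Hypothesis h_pos : forall n, 0 < h n.
Hypothesis r_pos : forall n, 0 < r n.
Hypothesis h_decr : Un_decreasing h.

Lemma staircase_two_balls (g : R -> R) :
  (forall t, 0 < t -> 0 < g t) ->
  (forall s t, 0 < s -> s <= t -> g s <= g t) ->
  (forall n, h (S n) < g (r n)) ->
  forall rho, 0 < rho -> exists P Q : R,
    forall x, staircase rho x -> ball P (g rho) x \/ ball Q (g rho) x.
Proof.
  intros Hgpos Hgmono Hhg rho Hrho.
  destruct (classic (exists n, r n <= rho)) as [Hex | Hnone].
  2: { exists 0, 0. intros x [n [Hn _]]. exfalso. eauto. }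
  destruct (classical_least_nat _ Hex) as [N [HN HNleast]].
  exists (- h N), 0. intros x [m [Hm ->]]. unfold ball.
  destruct (Nat.eq_dec m N) as [-> | HmN].
  - left. replace (- h N - - h N) with 0 by ring. rewrite Rabs_R0. auto.
  - right. replace (- h m - 0) with (- h m) by ring.
    rewrite Rabs_Ropp, Rabs_right by (apply Rle_ge, Rlt_le, h_pos).
    assert (Hm_far : (S N <= m)%nat) by (pose proof (HNleast m Hm); lia).
    pose proof (decreasing_prop h _ _ h_decr Hm_far).
    pose proof (Hhg N). pose proof (Hgmono (r N) rho (r_pos N) HN). lra.
Qed.

Lemma staircase_approx_infinite (f : R -> R) (eps : R) :
  (forall n, r n <= eps) ->
  (forall n, f (r n) < h n) ->
  (forall eta, 0 < eta -> exists n, h n < eta) ->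
  forall A : R -> Prop,
    (forall rho, 0 < rho -> rho <= eps -> forall P, staircase rho P ->
        exists Q, A Q /\ Rabs (Q - P) <= f rho) ->
    ~ finite_set A.
Proof.
  intros Hr_eps Hfh Hh_lim A HA Hfin.
  destruct (finite_set_gap_left A 0 Hfin) as [eta [Heta Hgap]].
  destruct (Hh_lim (eta / 2) ltac:(lra)) as [N HN].
  assert (HP : staircase (r N) (- h N)) by (exists N; split; [lra | reflexivity]).
  destruct (HA (r N) (r_pos N) (Hr_eps N) _ HP) as [Q [HQ HQdist]].
  apply (Hgap Q HQ).
  pose proof (Hfh N). pose proof (h_pos N).
  replace (Q - - h N) with (Q + h N) in HQdist by ring.
  destruct (Rcase_abs (Q + h N)) as [Hneg | Hnneg];
    [rewrite Rabs_left in HQdist by lra | rewrite Rabs_right in HQdist by lra]; lra.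
Qed.

End Staircase.

Lemma staircase_scales_exist (eps : R) (f g : R -> R) :
  0 < eps -> (forall t, 0 < t -> 0 < g t) ->
  (forall e b, 0 < e -> 0 < b -> exists t, 0 < t <= b /\ f t < e) ->
  exists h r : nat -> R,
    (forall n, 0 < h n /\ 0 < r n /\ r n <= eps /\ f (r n) < h n) /\
    (forall n, h (S n) <= h n / 2 /\ h (S n) < g (r n) /\ r (S n) <= r n).
Proof.
  intros Heps Hgpos Hsmall.
  pose (admissible (p : R * R) := 0 < fst p /\ 0 < snd p /\ snd p <= eps /\ f (snd p) < fst p).
  pose (refines (p q : R * R) :=
    fst q <= fst p / 2 /\ fst q < g (snd p) /\ snd q <= snd p).
  destruct (Hsmall 1 eps ltac:(lra) Heps) as [r0 [Hr0 Hfr0]].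
  destruct (dependent_choice_nat admissible refines (1, r0)) as [u Hu].
  - unfold admissible; simpl. lra.
  - intros [hp rp] (Hh & Hr & Hreps & Hf); simpl in *.
    pose proof (Hgpos rp Hr).
    pose (h' := Rmin hp (g rp) / 2).
    assert (Hh' : 0 < h') by (apply Rdiv_lt_0_compat; [apply Rmin_pos |]; lra).
    pose proof (Rmin_l hp (g rp)). pose proof (Rmin_r hp (g rp)).
    destruct (Hsmall h' rp Hh' Hr) as [r' [Hr' Hfr']].
    exists (h', r'). unfold admissible, refines; simpl. unfold h' in *. lra.
  - exists (fun n => fst (u n)), (fun n => snd (u n)).
    split; intro n; apply (Hu n).
Qed.

Theorem mainTheorem13 (eps : R) (f g : R -> R)
  (Heps : 0 < eps)
  (Hfpos : forall t, 0 < t -> 0 < f t)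
  (Hgpos : forall t, 0 < t -> 0 < g t)
  (Hgmono : forall s t, 0 < s -> s <= t -> g s <= g t)
  (Hflim : forall e, 0 < e -> exists d, 0 < d /\
             forall t, 0 < t < d -> Rabs (f t) < e) :
  exists S : R -> R -> Prop,
    (forall tau rho, 0 < tau -> tau <= rho -> forall x, S tau x -> S rho x) /\
    (forall rho, 0 < rho -> exists P Q : R,
        forall x, S rho x -> ball P (g rho) x \/ ball Q (g rho) x) /\
    (forall A : R -> Prop,
        (forall rho, 0 < rho -> rho <= eps -> forall P, S rho P ->
            exists Q, A Q /\ Rabs (Q - P) <= f rho) ->
        ~ finite_set A).
Proof.
  destruct (staircase_scales_exist eps f g Heps Hgpos
              (exists_small_value_below f Hflim)) as [h [r [Hadm Hstep]]].
  assert (h_pos : forall n, 0 < h n) by apply Hadm.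
  assert (r_pos : forall n, 0 < r n) by apply Hadm.
  assert (r_le_eps : forall n, r n <= eps) by apply Hadm.
  assert (f_lt_h : forall n, f (r n) < h n) by apply Hadm.
  assert (h_lt_g : forall n, h (S n) < g (r n)) by apply Hstep.
  assert (h_decr : Un_decreasing h) by (intro n; pose proof (Hstep n); pose proof (h_pos n); lra).
  assert (h_lim : forall eta, 0 < eta -> exists n, h n < eta).
  { apply halving_eventually_lt; [intro n; apply Rlt_le, h_pos | apply Hstep]. }
  exists (staircase h r). split; [| split].
  - intros tau rho _ Htr x. exact (staircase_mono h r tau rho x Htr).
  - exact (staircase_two_balls h r h_pos r_pos h_decr g Hgpos Hgmono h_lt_g).
  - exact (staircase_approx_infinite h r h_pos r_pos f eps r_le_eps f_lt_h h_lim).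
Qed.
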